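(* A linear $[n,k]$ MDS code $\mathcal C$ over $F$ is $2$-MDS if and only if, for every integer $w$ with $\max\{0,n-2k\}\le w\le n-k-3$ and every set $X\subseteq\{1,\dots,n\}$ of size $w$, the linear $[n-w,k]$ code obtained by puncturing $\mathcal C$ on $X$ is lightly-$2$-MDS.
   Context: $F=\mathrm{GF}(q)$; $\mathsf w(\cdot)$ is Hamming weight. A linear $[n,k]$ code is $2$-MDS if there do not exist three distinct vectors $e_0,e_1,e_2\in F^n$ in the same coset of the code with $\mathsf w(e_0)+\mathsf w(e_1)+\mathsf w(e_2)\le 2(n-k)$. The puncturing of $\mathcal C$ on $X$ is $\{(c_j)_{j\notin X}: c\in\mathcal C\}$. A linear $[n',k',d']$ code $\mathcal C'$ is lightly-$2$-MDS if there do not exist three nonzero vectors $e_0,e_1,e_2\in F^{n'}$, each of Hamming weight at most $d'-1$, in the same coset of $\mathcal C'$, with pairwise disjoint supports and $\mathsf w(e_0)+\mathsf w(e_1)+\mathsf w(e_2)\le 2(n'-k')$. *)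

From HB Require Import structures.
From mathcomp Require Import all_boot all_order all_algebra all_field.
Set Implicit Arguments. Unset Strict Implicit. Unset Printing Implicit Defensive.
Import GRing.Theory.
Local Open Scope ring_scope.

Section Codes.
Variable F : finFieldType.

Definition supp n (v : 'rV[F]_n) : {set 'I_n} := [set i | v 0 i != 0].
Definition wt n (v : 'rV[F]_n) : nat := #|supp v|.

(* minimum distance of a linear code (n+1 for the zero code, by convention) *)
Definition mindist n (C : {vspace 'rV[F]_n}) : nat :=
  \big[minn/n.+1]_(c : 'rV[F]_n | (c \in C) && (c != 0)) wt c.

(* C is an [n, \dim C] MDS code: d = n - k + 1, i.e. every nonzero
   codeword has weight >= n - k + 1 (Singleton bound gives the converse) *)
Definition isMDS n (C : {vspace 'rV[F]_n}) : Prop :=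
  forall c, c \in C -> c != 0 -> (n - \dim C + 1 <= wt c)%N.

Definition is2MDS n (C : {vspace 'rV[F]_n}) : Prop :=
  ~ exists e0 e1 e2 : 'rV[F]_n,
      [/\ [/\ e0 != e1, e1 != e2 & e0 != e2],
          e0 - e1 \in C, e1 - e2 \in C &
          (wt e0 + wt e1 + wt e2 <= 2 * (n - \dim C))%N].

Definition isLightly2MDS n (C : {vspace 'rV[F]_n}) : Prop :=
  ~ exists e0 e1 e2 : 'rV[F]_n,
      [/\ [/\ e0 != 0, e1 != 0 & e2 != 0],
          [/\ (wt e0 < mindist C)%N, (wt e1 < mindist C)%N & (wt e2 < mindist C)%N],
          e0 - e1 \in C /\ e1 - e2 \in C,
          [/\ [disjoint supp e0 & supp e1], [disjoint supp e1 & supp e2]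
            & [disjoint supp e0 & supp e2]] &
          (wt e0 + wt e1 + wt e2 <= 2 * (n - \dim C))%N].

(* puncturing on X: keep the coordinates outside X (in increasing order) *)
Definition punct_mx n (X : {set 'I_n}) : 'M[F]_(n, #|~: X|) :=
  \matrix_(i < n, j < #|~: X|) (i == enum_val j)%:R.

Definition puncture n (C : {vspace 'rV[F]_n}) (X : {set 'I_n})
  : {vspace 'rV[F]_#|~: X|} :=
  (linfun (mulmxr (punct_mx X)) @: C)%VS.

Lemma puncture_entry n (X : {set 'I_n}) (v : 'rV[F]_n) j :
  (v *m punct_mx X) 0 j = v 0 (enum_val j).
Proof.
rewrite !mxE (bigD1 (enum_val j)) //= mxE eqxx mulr1 big1 ?addr0 //.
by move=> i /negbTE ne; rewrite mxE ne mulr0.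
Qed.

End Codes.

(* If e0, e1, e2 is a lightly bad triple of the puncture on X, pad e1 with
   zeros on X and add the codewords lifting e0 - e1 and e2 - e1: this gives a
   triple in one coset of C whose weights exceed those of the e_i by at most
   |X| each.  Since puncturing an MDS code on at most n - k coordinates keeps
   its dimension, the budget 2 (n - |X| - k) + 2 |X| = 2 (n - k) is met, so C
   is not 2-MDS.
   Conversely, puncture a bad triple of C on a set X that contains every
   coordinate lying in two of the supports, enlarged to size n - 2k if needed.
   Off X the supports are disjoint, and each difference e_i - e_j is a nonzero
   codeword, hence of weight at least n - k + 1 but at most |X| plus the sizes
   of the two supports off X.  Summing these three inequalities against the
   weight budget shows that the punctured triple is nonzero, lies below the
   minimum distance n - k + 1 - |X| of the punctured code, and that
   |X| <= n - k - 3. *)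

From HB Require Import structures.
From mathcomp Require Import all_boot all_order all_algebra all_field.
From mathcomp Require Import zify.
Set Implicit Arguments. Unset Strict Implicit. Unset Printing Implicit Defensive.
Import GRing.Theory.
Local Open Scope ring_scope.

Section Overlaps.
Variables (T : finType) (S0 S1 S2 : {set T}).
Implicit Types (X A : {set T}).

Definition overlap_set : {set T} := (S0 :&: S1) :|: (S1 :&: S2) :|: (S0 :&: S2).

Definition disjoint_off X : Prop :=
  [/\ [disjoint S0 :\: X & S1 :\: X], [disjoint S1 :\: X & S2 :\: X]
    & [disjoint S0 :\: X & S2 :\: X]].

Definition card_off X : nat :=
  (#|S0 :\: X| + #|S1 :\: X| + #|S2 :\: X|)%N.

Lemma disjoint_off_overlap X : overlap_set \subset X -> disjoint_off X.
Proof.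
move=> /subsetP sOX; split; rewrite -setI_eq0; apply/eqP/setP=> x;
  rewrite !inE; apply/negP=> /andP[/andP[xX xA] /andP[_ xB]]; case/negP: xX;
  by apply: sOX; rewrite !inE xA xB ?orbT.
Qed.

Lemma card_off_le X : disjoint_off X -> (card_off X <= #|~: X|)%N.
Proof.
case=> d01 d12 d02; rewrite /card_off.
have /leqifP := leq_card_setU (S0 :\: X) (S1 :\: X); rewrite d01 => /eqP <-.
have /leqifP := leq_card_setU (S0 :\: X :|: S1 :\: X) (S2 :\: X).
rewrite -setI_eq0 setIUl setU_eq0 !setI_eq0 d02 d12 => /eqP <-.
by apply: subset_leq_card; apply/subsetP=> x; rewrite !inE -!andb_orr => /andP[].
Qed.

Lemma card_setI_sum A B : #|A :&: B| = (\sum_(x in B) (x \in A))%N.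
Proof.
rewrite -sum1_card big_mkcond [RHS]big_mkcond; apply: eq_bigr=> x _.
by rewrite inE; case: (x \in A); case: (x \in B).
Qed.

Lemma card_off_overlap :
  (card_off overlap_set + 2 * #|overlap_set| <= #|S0| + #|S1| + #|S2|)%N.
Proof.
set O := overlap_set; rewrite -(cardsID O S0) -(cardsID O S1) -(cardsID O S2).
suff: (2 * #|O| <= #|S0 :&: O| + #|S1 :&: O| + #|S2 :&: O|)%N by rewrite /card_off; lia.
rewrite !card_setI_sum -!big_split /= mulnC -sum_nat_const; apply: leq_sum=> x.
by rewrite !inE; case: (x \in S0); case: (x \in S1); case: (x \in S2).
Qed.

Lemma exists_superset_card A m :
  (#|A| <= m <= #|T|)%N -> exists2 B : {set T}, A \subset B & #|B| = m.
Proof.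
case/andP=> Am mT; have : (m - #|A| <= #|~: A|)%N.
  by have := cardsC A; lia.
case/card_geqP=> s [s_uniq s_size sA].
exists (A :|: [set x in s]); first exact: subsetUl.
rewrite cardsU cardsE (card_uniqP s_uniq) s_size.
suff -> : A :&: [set x in s] = set0 by rewrite cards0; lia.
by apply/setP=> x; rewrite !inE; apply/negP=> /andP[xA /sA]; rewrite inE xA.
Qed.

Lemma exists_disjoint_off k :
  (#|S0| + #|S1| + #|S2| <= 2 * (#|T| - k))%N ->
  exists X, [/\ (#|T| - 2 * k <= #|X|)%N, disjoint_off X
              & (card_off X + 2 * #|X| <= 2 * (#|T| - k))%N].
Proof.
move=> hS; have hO := card_off_overlap.
have [big|small] := leqP (#|T| - 2 * k) #|overlap_set|.
  exists overlap_set; split=> //; first exact: disjoint_off_overlap.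
  exact: leq_trans hS.
have [|X sOX cardX] := @exists_superset_card overlap_set (#|T| - 2 * k).
  by rewrite ltnW //=; lia.
have dX := disjoint_off_overlap sOX.
exists X; split=> //; first by rewrite cardX.
have := card_off_le dX; have := cardsC X; lia.
Qed.

End Overlaps.

Section Weight.
Variables (F : finFieldType) (n : nat).
Implicit Types (u v : 'rV[F]_n).

Lemma wt_eq0 v : (wt v == 0%N) = (v == 0).
Proof.
rewrite /wt cards_eq0; apply/eqP/eqP=> [suppv0|->]; last first.
  by apply/setP=> i; rewrite !inE mxE eqxx.
apply/rowP=> i; rewrite mxE; apply/eqP; apply: contraFT (in_set0 i) => vi.
by rewrite -suppv0 inE.
Qed.

Lemma wt0 : wt (0 : 'rV[F]_n) = 0%N.
Proof. by apply/eqP; rewrite wt_eq0. Qed.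

Lemma wtB_le u v : (wt (u - v) <= wt u + wt v)%N.
Proof.
rewrite /wt; apply: leq_trans (leq_card_setU _ _); apply: subset_leq_card.
apply/subsetP=> i; rewrite !inE !mxE; apply: contraR.
by rewrite negb_or !negbK => /andP[/eqP-> /eqP->]; rewrite subrr.
Qed.

Lemma neq_disjoint_supp u v : u != 0 -> [disjoint supp u & supp v] -> u != v.
Proof.
move=> u_nz; apply: contraTneq => <-.
by rewrite -setI_eq0 setIid -cards_eq0 -/(wt u) wt_eq0.
Qed.

Lemma mindist_ge (C : {vspace 'rV[F]_n}) m :
  (m <= n.+1)%N -> (forall c, c \in C -> c != 0 -> (m <= wt c)%N) ->
  (m <= mindist C)%N.
Proof.
move=> mn wtC; apply: (big_ind (fun d => m <= d)%N) => //.
  by move=> d d' md md'; rewrite leq_min md md'.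
by move=> c /andP[]; apply: wtC.
Qed.

End Weight.

Section Puncture.
Variables (F : finFieldType) (n : nat).
Implicit Types (X : {set 'I_n}) (u v : 'rV[F]_n) (C : {vspace 'rV[F]_n}).

Local Notation punct X v := (v *m @punct_mx F n X).

Lemma supp_punct X v : enum_val @: supp (punct X v) = supp v :\: X.
Proof.
apply/setP=> i; rewrite !inE; apply/imsetP/andP=> [[j]|[iX vi]].
  rewrite inE puncture_entry => vj ->; split=> //.
  by have := enum_valP j; rewrite inE.
have iCX : i \in ~: X by rewrite inE.
exists (enum_rank_in iCX i); last by rewrite enum_rankK_in.
by rewrite inE puncture_entry enum_rankK_in.
Qed.

Lemma wt_punct X v : wt (punct X v) = #|supp v :\: X|.
Proof. by rewrite /wt -supp_punct card_imset //; apply: enum_val_inj. Qed.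

Lemma wt_le_punct X v : (wt v <= #|X| + wt (punct X v))%N.
Proof.
by rewrite wt_punct /wt -(cardsID X (supp v)) leq_add2r subset_leq_card ?subsetIr.
Qed.

Lemma disjoint_supp_punct X u v :
  [disjoint supp (punct X u) & supp (punct X v)] =
  [disjoint supp u :\: X & supp v :\: X].
Proof. by rewrite -!supp_punct imset_disjoint //; apply: enum_val_inj. Qed.

Lemma wtB_le_punct X u v :
  (wt (u - v) <= #|X| + #|supp u :\: X| + #|supp v :\: X|)%N.
Proof.
apply: leq_trans (wt_le_punct X _) _; rewrite -addnA leq_add2l -!wt_punct mulmxBl.
exact: wtB_le.
Qed.

Lemma puncture_memP C X (u : 'rV[F]_#|~: X|) :
  reflect (exists2 c, c \in C & u = punct X c) (u \in puncture C X).
Proof. by apply: (iffP memv_imgP) => -[c cC ->]; exists c; rewrite ?lfunE. Qed.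

Lemma mem_puncture C X c : c \in C -> punct X c \in puncture C X.
Proof. by move=> cC; apply/puncture_memP; exists c. Qed.

Lemma dim_puncture C X :
  isMDS C -> (#|X| <= n - \dim C)%N -> \dim (puncture C X) = \dim C.
Proof.
move=> C_MDS wX; rewrite /puncture limg_dim_eq //; apply/eqP; rewrite -subv0.
apply/subvP=> c /memv_capP[cC]; rewrite memv_ker lfunE memv0 /= => /eqP pc0.
apply: contraT => c_nz; have := C_MDS c cC c_nz; have := wt_le_punct X c.
by rewrite pc0 wt0; lia.
Qed.

Lemma mindist_puncture C X :
  isMDS C -> (n - \dim C + 1 - #|X| <= mindist (puncture C X))%N.
Proof.
move=> C_MDS; apply: mindist_ge.
  by have := cardsC X; rewrite card_ord; lia.
move=> _ /puncture_memP[c cC ->] pc_nz.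
have c_nz : c != 0 by apply: contraNneq pc_nz => ->; rewrite mul0mx.
by rewrite leq_subLR; apply: leq_trans (C_MDS c cC c_nz) (wt_le_punct X c).
Qed.

Definition unpunct X (v : 'rV[F]_#|~: X|) : 'rV[F]_n := v *m (@punct_mx F n X)^T.

Lemma unpunctK X (v : 'rV[F]_#|~: X|) : punct X (unpunct v) = v.
Proof.
rewrite -mulmxA -[RHS]mulmx1; congr (_ *m _); apply/matrixP=> j j'.
rewrite !mxE (bigD1 (enum_val j)) //= !mxE eqxx mul1r big1 ?addr0.
  by rewrite (inj_eq enum_val_inj) eq_sym.
by move=> i /negbTE ne; rewrite !mxE ne mul0r.
Qed.

Lemma wt_unpunct X (v : 'rV[F]_#|~: X|) : wt (unpunct v) = wt v.
Proof.
rewrite -{2}(unpunctK v) wt_punct; apply: eq_card=> i; rewrite !inE.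
case iX: (i \in X) => //=; rewrite !mxE big1 ?eqxx // => j _; rewrite !mxE.
by case: eqP => [ij|]; rewrite ?mulr0 //; have := enum_valP j; rewrite inE -ij iX.
Qed.

End Puncture.

Lemma overlap_bounds (r w a0 a1 a2 : nat) :
  (a0 + a1 + a2 + 2 * w <= 2 * r)%N ->
  (r < w + a0 + a1)%N -> (r < w + a1 + a2)%N -> (r < w + a0 + a2)%N ->
  [/\ (w + 3 <= r)%N, [/\ 0 < a0, 0 < a1 & 0 < a2]%N,
      [/\ a0 < r + 1 - w, a1 < r + 1 - w & a2 < r + 1 - w]%N
    & (a0 + a1 + a2 <= 2 * (r - w))%N].
Proof. by move=> *; split; [|split..|]; lia. Qed.

Section TwoMDS.
Variables (F : finFieldType) (n k : nat) (C : {vspace 'rV[F]_n}).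
Hypotheses (dimC : \dim C = k) (C_MDS : isMDS C).

Local Notation punct X v := (v *m @punct_mx F n X).

Lemma lightly2MDS_puncture (X : {set 'I_n}) :
  (#|X| <= n - k)%N -> is2MDS C -> isLightly2MDS (puncture C X).
Proof.
move=> wX C2 [e0 [e1 [e2 [[e0_nz e1_nz _] _ [e01C e12C] [d01 d12 d02] wt_e]]]].
apply: C2; case/puncture_memP: e01C => c01 c01C e01.
case/puncture_memP: e12C => c12 c12C e12.
set x := unpunct e1; have px : punct X x = e1 := unpunctK e1.
have p0 : punct X (x + c01) = e0 by rewrite mulmxDl px -e01 addrC subrK.
have p2 : punct X (x - c12) = e2 by rewrite mulmxBl px -e12 opprB addrC subrK.
have neq_lift u v : punct X u != punct X v -> u != v.
  by apply: contra_neq => ->.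
exists (x + c01), x, (x - c12); split.
- split; apply: neq_lift; rewrite ?p0 ?px ?p2; exact: neq_disjoint_supp.
- by rewrite addrAC subrr add0r.
- by rewrite opprB addrC subrK.
- have wt0 : (wt (x + c01) <= #|X| + wt e0)%N by rewrite -p0 wt_le_punct.
  have wt2 : (wt (x - c12) <= #|X| + wt e2)%N by rewrite -p2 wt_le_punct.
  have wt1 : wt x = wt e1 := wt_unpunct e1.
  have dimX : \dim (puncture C X) = k by rewrite dim_puncture ?dimC.
  move: wt_e; rewrite dimX; have := cardsC X; rewrite card_ord; lia.
Qed.

Lemma is2MDS_of_lightly2MDS_punctures :
  (forall X : {set 'I_n}, (n - 2 * k <= #|X|)%N -> (#|X| + k + 3 <= n)%N ->
     isLightly2MDS (puncture C X)) ->
  is2MDS C.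
Proof.
move=> lightC [e0 [e1 [e2 [[n01 n12 n02] d01 d12 wt_e]]]].
have d02 : e0 - e2 \in C by rewrite -[e0](subrK e1) -addrA memvD.
have wt_e' : (#|supp e0| + #|supp e1| + #|supp e2| <= 2 * (#|'I_n| - k))%N.
  by rewrite card_ord -dimC.
have [X [wX [dj01 dj12 dj02] offX]] := exists_disjoint_off wt_e'.
rewrite card_ord /card_off in wX offX.
have pair_gt u v : u - v \in C -> u != v ->
    (n - k < #|X| + #|supp u :\: X| + #|supp v :\: X|)%N.
  move=> uvC; rewrite -subr_eq0 => uv_nz; rewrite -addn1 -dimC.
  exact: leq_trans (C_MDS uvC uv_nz) (wtB_le_punct X u v).
have [wX3 [a0_gt0 a1_gt0 a2_gt0] [a0_lt a1_lt a2_lt] a_le] :=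
  overlap_bounds offX (pair_gt _ _ d01 n01) (pair_gt _ _ d12 n12)
    (pair_gt _ _ d02 n02).
apply: (lightC X wX); first by lia.
exists (punct X e0), (punct X e1), (punct X e2).
have md := mindist_puncture X C_MDS; rewrite dimC in md.
have dimX : \dim (puncture C X) = k by rewrite dim_puncture ?dimC //; lia.
rewrite !wt_punct dimX.
split.
- by split; rewrite -wt_eq0 wt_punct -lt0n.
- by split; apply: leq_trans md.
- by split; rewrite -mulmxBl; apply: mem_puncture.
- by split; rewrite disjoint_supp_punct.
- apply: leq_trans a_le _; rewrite leq_mul2l subnAC leq_sub2r ?orbT //.
  by rewrite leq_subLR cardsC card_ord.
Qed.

End TwoMDS.

Theorem mainTheorem15 (F : finFieldType) (n k : nat)
    (C : {vspace 'rV[F]_n}) :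
  \dim C = k -> isMDS C ->
  (is2MDS C <->
   forall w : nat, (n - 2 * k <= w)%N -> (w + k + 3 <= n)%N ->
     forall X : {set 'I_n}, #|X| = w -> isLightly2MDS (puncture C X)).
Proof.
move=> dimC C_MDS; split=> [C2 w w_ge w_le X wX | lightC].
  by apply: (lightly2MDS_puncture dimC C_MDS _ C2); lia.
apply: (is2MDS_of_lightly2MDS_punctures dimC C_MDS) => X w_ge w_le.
exact: lightC w_ge w_le X erefl.
Qed.
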